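(* Let $\beta>0$, $g\in\mathcal G$, and $F(x)=(1-x)^\beta g(x)$ for $x\in[0,1)$. Then \[ \lim_{t\to\infty}t\int_0^1F(s)\big[F(s)-F((1-1/t)s)\big]\,ds=-\frac12\int_0^1F(s)^2\,ds. \]
   Context: $\mathcal G$ denotes the set of functions $g:[0,1)\to\mathbb{R}$ of the form $g(x)=G(1/(1-x))$, where $G:(0,\infty)\to\mathbb{R}$ is continuously differentiable and, for every $\varepsilon>0$, $|G(x)|=o(x^\varepsilon)$ and $|xG'(x)|=o(x^\varepsilon)$ as $x\to\infty$ (i.e. they grow slower than any power function). *)

From Stdlib Require Import Reals.
From Coquelicot Require Import Coquelicot.
Open Scope R_scope.

(* G : (0,oo) -> R is the generator of g in the class \mathcal G:
   C^1 on (0,oo), and |G(x)| = o(x^eps), |x G'(x)| = o(x^eps) as x -> oo,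
   for every eps > 0. Values of G outside (0,oo) are irrelevant. *)
Definition in_calG (G : R -> R) : Prop :=
  (forall x, 0 < x -> ex_derive G x) /\
  (forall x, 0 < x -> continuous (Derive G) x) /\
  (forall eps, 0 < eps ->
     is_lim (fun x => Rabs (G x) / Rpower x eps) p_infty 0) /\
  (forall eps, 0 < eps ->
     is_lim (fun x => Rabs (x * Derive G x) / Rpower x eps) p_infty 0).

Definition g_of (G : R -> R) (x : R) : R := G (1 / (1 - x)).

Definition F_of (beta : R) (G : R -> R) (x : R) : R :=
  Rpower (1 - x) beta * g_of G x.

(* For P = F and a = 1 - 1/t, the pointwise identity
     P(s) (P(s) - P(a s)) = 1/2 (P(s) - P(a s))^2 + 1/2 P(s)^2 - 1/2 P(a s)^2
   together with the substitution s -> a s gives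
     t ∫_0^1 P (P - P(a.)) = 1/2 X(t) - 1/2 t/(t-1) J + 1/2 t/(t-1) Z(t),
   where J = ∫_0^1 P^2, X(t) = t ∫_0^1 (P(s) - P(a s))^2 ds and
   Z(t) = t ∫_{1-1/t}^1 P^2.  The only analytic input is a pair of power
   bounds |P(x)| <= K (1-x)^γ and |P'(x)| <= K (1-x)^(γ-1) on [0,1) with
   0 < γ < 1/2: by the mean value theorem away from 1 and the trivial bound
   near 1, both X(t) and Z(t) are O(t^(-2γ)), so the limit is -J/2.
   The file first proves this abstract statement (section [PowerDecay]).
   It then shows that a generator G of the class \mathcal G satisfies
   |G(y)|, |y G'(y)| <= C y^e on [1,oo) for every e > 0, which yields the
   power bounds for F(x) = (1-x)^β G(1/(1-x)) with γ = min(β/2, 1/4),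
   e = β - γ; extending F by 0 on [1,oo) gives the continuous function the
   abstract statement needs, and the main theorem follows. *)

From Stdlib Require Import Reals Lra.
From Coquelicot Require Import Coquelicot.
Open Scope R_scope.

Lemma Rpower_pos x p : 0 < Rpower x p.
Proof. unfold Rpower; apply exp_pos. Qed.

Lemma Rpower_le_base_neg x y p :
  0 < x -> x <= y -> p <= 0 -> Rpower y p <= Rpower x p.
Proof.
  intros Hx Hxy Hp; unfold Rpower.
  assert (Hln : p * ln y <= p * ln x)
    by (apply Rmult_le_compat_neg_l; [lra | apply ln_le; lra]).
  destruct Hln as [Hlt|Heq]; [left; apply exp_increasing, Hlt | rewrite Heq; lra].
Qed.

Lemma Rpower_sq x p : Rpower x p ^ 2 = Rpower x (2 * p).
Proof. replace (2 * p) with (p + p) by ring. rewrite Rpower_plus. simpl; ring. Qed.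

Lemma Rpower_inv_base z p : 0 < z -> Rpower (/ z) p = Rpower z (- p).
Proof. intros Hz. unfold Rpower. rewrite ln_Rinv by exact Hz. f_equal; ring. Qed.

Lemma is_derive_Rpower_1m p s : s < 1 ->
  is_derive (fun s => Rpower (1 - s) p) s (- (p * Rpower (1 - s) (p - 1))).
Proof.
  intros Hs.
  assert (Hout : is_derive (fun x => Rpower x p) (1 - s) (p * Rpower (1 - s) (p - 1))).
  { apply is_derive_Reals, derivable_pt_lim_power. lra. }
  assert (Hin : is_derive (fun s : R => 1 - s) s (-1)) by (auto_derive; auto; ring).
  replace (- (p * Rpower (1 - s) (p - 1))) with (scal (-1) (p * Rpower (1 - s) (p - 1)))
    by (unfold scal; simpl; unfold mult; simpl; ring).
  exact (is_derive_comp _ _ _ _ _ Hout Hin).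
Qed.

Lemma is_lim_Rpower_inv c : 0 < c -> is_lim (fun t => Rpower (/ t) c) p_infty 0.
Proof.
  intros Hc. apply is_lim_spec. intros eps. simpl.
  set (M := / Rpower eps (/ c)).
  assert (HM : 0 < M) by (apply Rinv_0_lt_compat, Rpower_pos).
  exists M. intros t Ht.
  rewrite Rminus_0_r, Rabs_pos_eq by (left; apply Rpower_pos).
  apply Rlt_le_trans with (Rpower (/ M) c).
  - apply Rlt_Rpower_l; auto. split.
    + apply Rinv_0_lt_compat; lra.
    + apply Rinv_lt_contravar; [apply Rmult_lt_0_compat|]; lra.
  - unfold M. destruct eps as [e He]; simpl.
    rewrite Rinv_inv, Rpower_mult, Rinv_l, Rpower_1 by lra. lra.
Qed.

Lemma is_lim_const_mult_Rpower_inv C c :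
  0 < c -> is_lim (fun t => C * Rpower (/ t) c) p_infty 0.
Proof.
  intros Hc. pose proof (is_lim_scal_l _ C _ _ (is_lim_Rpower_inv c Hc)) as H.
  simpl in H. rewrite Rmult_0_r in H. exact H.
Qed.

Lemma is_lim_ratio_pred : is_lim (fun t => t / (t - 1)) p_infty 1.
Proof.
  apply is_lim_spec. intros [e He]. simpl.
  exists (2 + 2 / e). intros t Ht.
  assert (H2 : 0 < 2 / e) by (apply Rdiv_lt_0_compat; lra).
  replace (t / (t - 1) - 1) with (/ (t - 1)) by (field; lra).
  rewrite Rabs_pos_eq by (left; apply Rinv_0_lt_compat; lra).
  apply Rmult_lt_reg_l with (t - 1); [lra|].
  rewrite Rinv_r by lra.
  apply Rmult_lt_reg_r with (/ e); [apply Rinv_0_lt_compat; lra|].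
  rewrite Rmult_assoc, Rinv_r, Rmult_1_r by lra. unfold Rdiv in *. lra.
Qed.

Lemma continuous_dilate (P : R -> R) a x :
  (forall y, continuous P y) -> continuous (fun s => P (a * s)) x.
Proof.
  intros HP. apply (continuous_comp (fun s => a * s) P); [|apply HP].
  apply (continuous_mult (fun _ => a) (fun s => s));
    [apply continuous_const | apply continuous_id].
Qed.

Lemma continuous_sq (P : R -> R) x :
  continuous P x -> continuous (fun s => P s ^ 2) x.
Proof.
  intros HP. apply (continuous_ext (fun s => P s * P s)); [intros; simpl; ring|].
  apply (continuous_mult P); exact HP.
Qed.

Lemma continuous_increment_sq (P : R -> R) a x :
  (forall y, continuous P y) -> continuous (fun s => (P s - P (a * s)) ^ 2) x.
Proof.
  intros HP. apply continuous_sq, (continuous_minus P); [apply HP|].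
  apply continuous_dilate, HP.
Qed.

Lemma ex_RInt_cont (f : R -> R) a b : (forall x, continuous f x) -> ex_RInt f a b.
Proof. intros H. apply (@ex_RInt_continuous R_CompleteNormedModule). intros; apply H. Qed.

Lemma is_RInt_cont (f : R -> R) a b :
  (forall x, continuous f x) -> is_RInt f a b (RInt f a b).
Proof. intros H. apply (@RInt_correct R_CompleteNormedModule), ex_RInt_cont, H. Qed.

Lemma RInt_const_width h c : RInt (fun _ => c) (1 - h) 1 = h * c.
Proof. rewrite RInt_const. unfold scal; simpl; unfold mult; simpl. ring. Qed.

(* Completing the square: for a = 1 - 1/t the quantity of the theorem splits
   into the increment energy X(t), the mass J and the tail mass Z(t). *)
Lemma increment_decomposition (P : R -> R) t :
  (forall x, continuous P x) -> 2 <= t ->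
  t * RInt (fun s => P s * (P s - P ((1 - 1 / t) * s))) 0 1 =
  / 2 * (t * RInt (fun s => (P s - P ((1 - 1 / t) * s)) ^ 2) 0 1)
  - / 2 * (t / (t - 1)) * RInt (fun s => P s ^ 2) 0 1
  + / 2 * (t / (t - 1)) * (t * RInt (fun s => P s ^ 2) (1 - 1 / t) 1).
Proof.
  intros HP Ht.
  set (a := 1 - 1 / t).
  assert (Ha : 1/2 <= a < 1).
  { assert (0 < 1 / t) by (apply Rdiv_lt_0_compat; lra).
    assert (1 / t <= 1 / 2) by (unfold Rdiv; rewrite !Rmult_1_l; apply Rinv_le_contravar; lra).
    unfold a; lra. }
  set (Q := fun s => P s ^ 2).
  set (D := fun s => (P s - P (a * s)) ^ 2).
  assert (HQ : forall x, continuous Q x) by (intros; apply continuous_sq, HP).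
  assert (HD : forall x, continuous D x) by (intros; apply continuous_increment_sq, HP).
  assert (HQa : is_RInt (fun s => Q (a * s)) 0 1 (/ a * RInt Q 0 a)).
  { pose proof (is_RInt_comp_lin Q a 0 0 1 (RInt Q 0 a)) as H.
    replace (a * 0 + 0) with 0 in H by ring. replace (a * 1 + 0) with a in H by ring.
    apply (is_RInt_scal _ _ _ (/ a)) in H; [|apply is_RInt_cont, HQ].
    eapply is_RInt_ext; [|exact H].
    intros x _. unfold scal; simpl; unfold mult; simpl. rewrite Rplus_0_r. field. lra. }
  assert (Hsum : is_RInt (fun s => P s * (P s - P (a * s))) 0 1
     (/ 2 * RInt D 0 1 + / 2 * RInt Q 0 1 - / 2 * (/ a * RInt Q 0 a))).
  { pose proof (is_RInt_scal _ _ _ (/ 2) _ (is_RInt_cont D 0 1 HD)) as H1.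
    pose proof (is_RInt_scal _ _ _ (/ 2) _ (is_RInt_cont Q 0 1 HQ)) as H2.
    pose proof (is_RInt_scal _ _ _ (/ 2) _ HQa) as H3.
    pose proof (is_RInt_minus _ _ _ _ _ _ (is_RInt_plus _ _ _ _ _ _ H1 H2) H3) as H.
    eapply is_RInt_ext; [|exact H].
    intros x _. change (/ 2 * D x + / 2 * Q x - / 2 * Q (a * x) = P x * (P x - P (a * x))).
    unfold D, Q. field. }
  rewrite (is_RInt_unique _ _ _ _ Hsum).
  fold D Q.
  rewrite <- (RInt_Chasles Q 0 a 1) by (apply ex_RInt_cont; auto).
  change (plus (RInt Q 0 a) (RInt Q a 1)) with (RInt Q 0 a + RInt Q a 1).
  unfold a. field. split; lra.
Qed.

Section PowerDecay.

Variables (P dP : R -> R) (K gam : R).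
Hypothesis P_cont : forall x, continuous P x.
Hypothesis P_deriv : forall x, 0 <= x < 1 -> is_derive P x (dP x).
Hypothesis P_decay : forall x, 0 <= x < 1 -> Rabs (P x) <= K * Rpower (1 - x) gam.
Hypothesis dP_decay :
  forall x, 0 <= x < 1 -> Rabs (dP x) <= K * Rpower (1 - x) (gam - 1).
Hypothesis gam_range : 0 < gam < 1/2.
Hypothesis K_pos : 0 < K.

(* Away from 1 the increment over [(1-h)s, s] is controlled by the mean value
   theorem and the decay of P'. *)
Lemma increment_far h s : 0 < h < 1 -> 0 < s < 1 - h ->
  (P s - P ((1 - h) * s)) ^ 2 <= K ^ 2 * h ^ 2 * Rpower (1 - s) (2 * gam - 2).
Proof.
  intros Hh Hs.
  assert (Has : (1 - h) * s <= s) by nra.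
  destruct (MVT_gen P ((1 - h) * s) s dP) as [c [Hc Heq]].
  - intros x Hx. rewrite Rmin_left, Rmax_right in Hx by lra. apply P_deriv. nra.
  - intros x _. apply continuity_pt_filterlim, P_cont.
  - rewrite Rmin_left, Rmax_right in Hc by lra.
    assert (Hdc : Rabs (dP c) <= K * Rpower (1 - s) (gam - 1)).
    { eapply Rle_trans; [apply dP_decay; nra|].
      apply Rmult_le_compat_l; [lra|]. apply Rpower_le_base_neg; lra. }
    assert (Hincr : Rabs (P s - P ((1 - h) * s)) <= K * Rpower (1 - s) (gam - 1) * h).
    { rewrite Heq, Rabs_mult. replace (s - (1 - h) * s) with (s * h) by ring.
      rewrite (Rabs_pos_eq (s * h)) by nra.
      apply Rmult_le_compat; [apply Rabs_pos | nra | exact Hdc | nra]. }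
    rewrite <- pow2_abs.
    apply Rle_trans with ((K * Rpower (1 - s) (gam - 1) * h) ^ 2);
      [apply pow_incr; split; [apply Rabs_pos | exact Hincr]|].
    replace (2 * gam - 2) with (2 * (gam - 1)) by ring. rewrite <- Rpower_sq. nra.
Qed.

(* Near 1 both values are small, by the decay of P itself. *)
Lemma increment_near h s : 0 < h < 1 -> 1 - h < s < 1 ->
  (P s - P ((1 - h) * s)) ^ 2 <= 4 * K ^ 2 * Rpower (2 * h) (2 * gam).
Proof.
  intros Hh Hs.
  assert (Hbound : forall x, 1 - 2 * h <= x -> 0 <= x < 1 ->
            Rabs (P x) <= K * Rpower (2 * h) gam).
  { intros x Hx Hx'. eapply Rle_trans; [apply P_decay, Hx'|].
    apply Rmult_le_compat_l; [lra|]. apply Rle_Rpower_l; lra. }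
  assert (Hincr : Rabs (P s - P ((1 - h) * s)) <= 2 * (K * Rpower (2 * h) gam)).
  { eapply Rle_trans; [apply Rabs_triang|]. rewrite Rabs_Ropp.
    pose proof (Hbound s ltac:(lra) ltac:(lra)).
    pose proof (Hbound ((1 - h) * s) ltac:(nra) ltac:(nra)). lra. }
  rewrite <- pow2_abs.
  apply Rle_trans with ((2 * (K * Rpower (2 * h) gam)) ^ 2);
    [apply pow_incr; split; [apply Rabs_pos | exact Hincr]|].
  rewrite <- Rpower_sq. nra.
Qed.

(* Integrating [increment_far] against the exact antiderivative of (1-s)^(2γ-2). *)
Lemma energy_far h : 0 < h <= 1/2 ->
  RInt (fun s => (P s - P ((1 - h) * s)) ^ 2) 0 (1 - h)
  <= h * (K ^ 2 / (1 - 2 * gam) * Rpower h (2 * gam)).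
Proof.
  intros Hh.
  set (Psi := fun s => K ^ 2 * h ^ 2 / (1 - 2 * gam) * Rpower (1 - s) (2 * gam - 1)).
  set (psi := fun s => K ^ 2 * h ^ 2 * Rpower (1 - s) (2 * gam - 2)).
  assert (Hder : forall x, x < 1 -> is_derive Psi x (psi x)).
  { intros x Hx. unfold Psi, psi.
    replace (K ^ 2 * h ^ 2 * Rpower (1 - x) (2 * gam - 2)) with
      (K ^ 2 * h ^ 2 / (1 - 2 * gam) * - ((2 * gam - 1) * Rpower (1 - x) (2 * gam - 1 - 1)))
      by (replace (2 * gam - 1 - 1) with (2 * gam - 2) by ring; field; lra).
    apply is_derive_scal, is_derive_Rpower_1m, Hx. }
  assert (HI : is_RInt psi 0 (1 - h) (Psi (1 - h) - Psi 0)).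
  { apply (@is_RInt_derive R_CompleteNormedModule).
    - intros x Hx. rewrite Rmin_left, Rmax_right in Hx by lra. apply Hder. lra.
    - intros x Hx. rewrite Rmin_left, Rmax_right in Hx by lra.
      apply (@ex_derive_continuous R_AbsRing R_NormedModule psi). eexists. unfold psi.
      apply is_derive_scal, is_derive_Rpower_1m. lra. }
  assert (HPsi0 : 0 <= Psi 0).
  { unfold Psi. apply Rmult_le_pos; [|left; apply Rpower_pos].
    apply Rdiv_le_0_compat; [apply Rmult_le_pos; apply pow2_ge_0 | lra]. }
  assert (HPsih : Psi (1 - h) = h * (K ^ 2 / (1 - 2 * gam) * Rpower h (2 * gam))).
  { unfold Psi. replace (1 - (1 - h)) with h by ring.
    assert (E : Rpower h (2 * gam) = h * Rpower h (2 * gam - 1)).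
    { replace (2 * gam) with (1 + (2 * gam - 1)) at 1 by ring.
      rewrite Rpower_plus, Rpower_1 by lra. reflexivity. }
    rewrite E. field. lra. }
  apply Rle_trans with (Psi (1 - h) - Psi 0); [|lra].
  rewrite <- (is_RInt_unique _ _ _ _ HI).
  apply RInt_le; [lra | apply ex_RInt_cont; intros; apply continuous_increment_sq, P_cont
                 | eexists; exact HI|].
  intros x Hx. apply increment_far; lra.
Qed.

Lemma energy_near h : 0 < h <= 1/2 ->
  RInt (fun s => (P s - P ((1 - h) * s)) ^ 2) (1 - h) 1
  <= h * (4 * K ^ 2 * Rpower 2 (2 * gam) * Rpower h (2 * gam)).
Proof.
  intros Hh.
  replace (4 * K ^ 2 * Rpower 2 (2 * gam) * Rpower h (2 * gam))
    with (4 * K ^ 2 * Rpower (2 * h) (2 * gam))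
    by (rewrite <- Rpower_mult_distr by lra; ring).
  rewrite <- (RInt_const_width h (4 * K ^ 2 * Rpower (2 * h) (2 * gam))).
  apply RInt_le; [lra | apply ex_RInt_cont; intros; apply continuous_increment_sq, P_cont
                 | apply ex_RInt_const|].
  intros x Hx. apply increment_near; lra.
Qed.

Lemma energy_bound t : 2 <= t ->
  0 <= t * RInt (fun s => (P s - P ((1 - 1 / t) * s)) ^ 2) 0 1 <=
  (K ^ 2 / (1 - 2 * gam) + 4 * K ^ 2 * Rpower 2 (2 * gam)) * Rpower (/ t) (2 * gam).
Proof.
  intros Ht.
  set (h := / t).
  assert (Hh : 0 < h <= 1/2).
  { unfold h; split; [apply Rinv_0_lt_compat; lra|].
    replace (1/2) with (/2) by field. apply Rinv_le_contravar; lra. }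
  assert (Hth : t * h = 1) by (unfold h; field; lra).
  replace (1 - 1 / t) with (1 - h) by (unfold h, Rdiv; ring).
  set (f := fun s => (P s - P ((1 - h) * s)) ^ 2).
  assert (Hex : forall x y, ex_RInt f x y)
    by (intros; apply ex_RInt_cont; intros; apply continuous_increment_sq, P_cont).
  split.
  - apply Rmult_le_pos; [lra|]. apply RInt_ge_0; [lra | apply Hex |].
    intros; apply pow2_ge_0.
  - rewrite <- (RInt_Chasles f 0 (1 - h) 1) by apply Hex.
    change (plus (RInt f 0 (1 - h)) (RInt f (1 - h) 1))
      with (RInt f 0 (1 - h) + RInt f (1 - h) 1).
    pose proof (energy_far h Hh) as Hfar. pose proof (energy_near h Hh) as Hnear.
    fold f in Hfar, Hnear.
    apply Rle_trans with (t * (h * (K ^ 2 / (1 - 2 * gam) * Rpower h (2 * gam)) +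
                               h * (4 * K ^ 2 * Rpower 2 (2 * gam) * Rpower h (2 * gam)))).
    + apply Rmult_le_compat_l; lra.
    + rewrite Rmult_plus_distr_l, <- !Rmult_assoc, Hth. lra.
Qed.

Lemma tail_bound t : 2 <= t ->
  0 <= t * RInt (fun s => P s ^ 2) (1 - 1 / t) 1 <= K ^ 2 * Rpower (/ t) (2 * gam).
Proof.
  intros Ht.
  set (h := / t).
  assert (Hh : 0 < h <= 1/2).
  { unfold h; split; [apply Rinv_0_lt_compat; lra|].
    replace (1/2) with (/2) by field. apply Rinv_le_contravar; lra. }
  assert (Hth : t * h = 1) by (unfold h; field; lra).
  replace (1 - 1 / t) with (1 - h) by (unfold h, Rdiv; ring).
  assert (Hex : ex_RInt (fun s => P s ^ 2) (1 - h) 1)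
    by (apply ex_RInt_cont; intros; apply continuous_sq, P_cont).
  split.
  - apply Rmult_le_pos; [lra|]. apply RInt_ge_0; [lra | exact Hex |].
    intros; apply pow2_ge_0.
  - assert (Hmass : RInt (fun s => P s ^ 2) (1 - h) 1 <= h * (K ^ 2 * Rpower h (2 * gam))).
    { rewrite <- (RInt_const_width h (K ^ 2 * Rpower h (2 * gam))).
      apply RInt_le; [lra | exact Hex | apply ex_RInt_const |].
      intros x Hx.
      assert (Hb : Rabs (P x) <= K * Rpower h gam).
      { eapply Rle_trans; [apply P_decay; lra|].
        apply Rmult_le_compat_l; [lra|]. apply Rle_Rpower_l; lra. }
      rewrite <- pow2_abs.
      apply Rle_trans with ((K * Rpower h gam) ^ 2);
        [apply pow_incr; split; [apply Rabs_pos | exact Hb]|].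
      rewrite <- Rpower_sq. simpl; lra. }
    apply Rle_trans with (t * (h * (K ^ 2 * Rpower h (2 * gam))));
      [apply Rmult_le_compat_l; lra|].
    rewrite <- Rmult_assoc, Hth. lra.
Qed.

Theorem power_decay_limit :
  is_lim (fun t => t * RInt (fun s => P s * (P s - P ((1 - 1 / t) * s))) 0 1)
    p_infty (- (1 / 2) * RInt (fun s => P s ^ 2) 0 1).
Proof.
  set (J := RInt (fun s => P s ^ 2) 0 1).
  set (X := fun t => t * RInt (fun s => (P s - P ((1 - 1 / t) * s)) ^ 2) 0 1).
  set (Y := fun t => t / (t - 1)).
  set (Z := fun t => t * RInt (fun s => P s ^ 2) (1 - 1 / t) 1).
  apply is_lim_ext_loc with (fun t => / 2 * X t - / 2 * Y t * J + / 2 * Y t * Z t).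
  { exists 2. intros t Ht. symmetry. apply increment_decomposition; auto; lra. }
  assert (HX : is_lim X p_infty 0).
  { apply is_lim_le_le_loc with (fun _ => 0) (fun t =>
      (K ^ 2 / (1 - 2 * gam) + 4 * K ^ 2 * Rpower 2 (2 * gam)) * Rpower (/ t) (2 * gam));
      [| apply is_lim_const | apply is_lim_const_mult_Rpower_inv; lra].
    exists 2. intros t Ht. apply energy_bound; lra. }
  assert (HZ : is_lim Z p_infty 0).
  { apply is_lim_le_le_loc with (fun _ => 0) (fun t => K ^ 2 * Rpower (/ t) (2 * gam));
      [| apply is_lim_const | apply is_lim_const_mult_Rpower_inv; lra].
    exists 2. intros t Ht. apply tail_bound; lra. }
  pose proof is_lim_ratio_pred as HY. fold Y in HY.
  replace (- (1 / 2) * J) with (/ 2 * 0 - / 2 * 1 * J + / 2 * 1 * 0) by field.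
  apply is_lim_plus'; [apply is_lim_minus'|];
    repeat (apply (is_lim_mult _ _ _ (Finite _) (Finite _)); [| | exact I]);
    auto using is_lim_const.
Qed.

End PowerDecay.

Lemma little_o_power_bound (phi : R -> R) e : 0 < e ->
  (forall y, 1 <= y -> continuous phi y) ->
  is_lim (fun y => Rabs (phi y) / Rpower y e) p_infty 0 ->
  exists C, 0 < C /\ forall y, 1 <= y -> Rabs (phi y) <= C * Rpower y e.
Proof.
  intros He Hc Hl. apply is_lim_spec in Hl.
  destruct (Hl (mkposreal 1 Rlt_0_1)) as [M HM]. simpl in HM.
  (* on the compact part [1, max 1 M] use the maximum of |phi| *)
  destruct (continuity_ab_maj (fun y => Rabs (phi y)) 1 (Rmax 1 M)) as [m [Hm _]].
  { apply Rmax_l. }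
  { intros c Hc'. apply continuity_pt_comp with (f1 := phi) (f2 := Rabs).
    - apply continuity_pt_filterlim, Hc. lra.
    - apply Rcontinuity_abs. }
  exists (1 + Rabs (phi m)). split; [pose proof (Rabs_pos (phi m)); lra|].
  intros y Hy.
  assert (Hp : 1 <= Rpower y e)
    by (rewrite <- (Rpower_O y) by lra; apply Rle_Rpower; lra).
  pose proof (Rabs_pos (phi m)).
  destruct (Rle_lt_dec y (Rmax 1 M)) as [Hle|Hlt].
  - pose proof (Hm y (conj Hy Hle)). nra.
  - assert (HyM : M < y) by (pose proof (Rmax_r 1 M); lra).
    specialize (HM y HyM). rewrite Rminus_0_r in HM.
    rewrite Rabs_pos_eq in HM by (apply Rdiv_le_0_compat; [apply Rabs_pos | lra]).
    apply Rmult_lt_compat_r with (r := Rpower y e) in HM; [|lra].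
    unfold Rdiv in HM. rewrite Rmult_assoc, Rinv_l, Rmult_1_r in HM by lra. nra.
Qed.

Lemma calG_power_bound (G : R -> R) e : in_calG G -> 0 < e ->
  exists C, 0 < C /\ forall y, 1 <= y ->
    Rabs (G y) <= C * Rpower y e /\ Rabs (y * Derive G y) <= C * Rpower y e.
Proof.
  intros [HG1 [HG2 [HG3 HG4]]] He.
  destruct (little_o_power_bound G e He) as [C1 [HC1 HB1]].
  { intros y Hy. apply (@ex_derive_continuous R_AbsRing R_NormedModule), HG1. lra. }
  { apply HG3, He. }
  destruct (little_o_power_bound (fun y => y * Derive G y) e He) as [C2 [HC2 HB2]].
  { intros y Hy. apply (@continuous_mult R_UniformSpace R_AbsRing (fun y => y));
      [apply continuous_id | apply HG2; lra]. }
  { apply HG4, He. }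
  exists (C1 + C2). split; [lra|].
  intros y Hy. pose proof (Rpower_pos y e).
  specialize (HB1 y Hy). specialize (HB2 y Hy). split; nra.
Qed.

Definition dF_of (beta : R) (G : R -> R) (x : R) : R :=
  Rpower (1 - x) (beta - 1) *
    (- beta * G (1 / (1 - x)) + (1 / (1 - x)) * Derive G (1 / (1 - x))).

Lemma F_of_derive (beta : R) (G : R -> R) x :
  (forall y, 0 < y -> ex_derive G y) -> x < 1 ->
  is_derive (F_of beta G) x (dF_of beta G x).
Proof.
  intros HG Hx.
  assert (Hy : 0 < 1 / (1 - x)) by (apply Rdiv_lt_0_compat; lra).
  assert (Dpow := is_derive_Rpower_1m beta x Hx).
  assert (Dinv : is_derive (fun x => 1 / (1 - x)) x (/ (1 - x) ^ 2))
    by (auto_derive; [lra | field; lra]).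
  assert (Dg := is_derive_comp G _ x _ _ (Derive_correct G _ (HG _ Hy)) Dinv).
  assert (D := is_derive_mult _ _ x _ _ Dpow Dg Rmult_comm).
  assert (E : Rpower (1 - x) beta = Rpower (1 - x) (beta - 1) * (1 - x)).
  { replace beta with ((beta - 1) + 1) at 1 by ring.
    rewrite Rpower_plus, Rpower_1 by lra. reflexivity. }
  unfold F_of, g_of, dF_of.
  eapply is_derive_ext; [intros; reflexivity|].
  match goal with |- is_derive _ _ ?l => replace l with
    (plus (mult (- (beta * Rpower (1 - x) (beta - 1))) (G (1 / (1 - x))))
       (mult (Rpower (1 - x) beta) (scal (/ (1 - x) ^ 2) (Derive G (1 / (1 - x)))))) end;
    [exact D|].
  change (- (beta * Rpower (1 - x) (beta - 1)) * G (1 / (1 - x)) +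
    Rpower (1 - x) beta * (/ (1 - x) ^ 2 * Derive G (1 / (1 - x))) =
    Rpower (1 - x) (beta - 1) * (- beta * G (1 / (1 - x)) + 1 / (1 - x) * Derive G (1 / (1 - x)))).
  rewrite E. field. lra.
Qed.

Lemma F_of_decay (beta : R) (G : R -> R) C e x :
  0 <= beta -> 0 <= x < 1 ->
  (forall y, 1 <= y ->
     Rabs (G y) <= C * Rpower y e /\ Rabs (y * Derive G y) <= C * Rpower y e) ->
  Rabs (F_of beta G x) <= C * Rpower (1 - x) (beta - e) /\
  Rabs (dF_of beta G x) <= (1 + beta) * C * Rpower (1 - x) (beta - e - 1).
Proof.
  intros Hb Hx HB.
  set (y := 1 / (1 - x)).
  assert (Hy : 1 <= y)
    by (unfold y; apply Rmult_le_reg_r with (1 - x); [lra | field_simplify; lra]).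
  assert (Hye : Rpower y e = Rpower (1 - x) (- e))
    by (unfold y, Rdiv; rewrite Rmult_1_l; apply Rpower_inv_base; lra).
  destruct (HB y Hy) as [HG HdG]. rewrite Hye in HG, HdG.
  assert (Hsplit : forall p, Rpower (1 - x) (p - e) = Rpower (1 - x) p * Rpower (1 - x) (- e))
    by (intros; rewrite <- Rpower_plus; f_equal; ring).
  pose proof (Rpower_pos (1 - x) beta). pose proof (Rpower_pos (1 - x) (beta - 1)).
  pose proof (Rpower_pos (1 - x) (- e)).
  unfold F_of, g_of, dF_of; fold y.
  rewrite !Rabs_mult, !(Rabs_pos_eq (Rpower _ _)) by lra.
  replace (beta - e - 1) with ((beta - 1) - e) by ring. rewrite !Hsplit.
  split; [nra|].
  assert (Hsum : Rabs (- beta * G y + y * Derive G y) <= (1 + beta) * C * Rpower (1 - x) (- e)).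
  { eapply Rle_trans; [apply Rabs_triang|].
    rewrite Rabs_mult, Rabs_Ropp, (Rabs_pos_eq beta) by lra. nra. }
  nra.
Qed.

Definition F_ext (beta : R) (G : R -> R) (x : R) : R :=
  if Rlt_dec x 1 then F_of beta G x else 0.

Lemma F_ext_eq (beta : R) (G : R -> R) x : x < 1 -> F_ext beta G x = F_of beta G x.
Proof. intros Hx. unfold F_ext. destruct (Rlt_dec x 1); [reflexivity | contradiction]. Qed.

Lemma continuous_at_1_of_decay (P : R -> R) K gam :
  0 < gam -> 0 < K ->
  (forall x, 1 <= x -> P x = 0) ->
  (forall x, 0 <= x < 1 -> Rabs (P x) <= K * Rpower (1 - x) gam) ->
  continuous P 1.
Proof.
  intros Hgam HK Hzero Hdecay. apply continuity_pt_filterlim. intros eps Heps.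
  set (delta := Rmin 1 (Rpower (eps / K) (/ gam))).
  assert (Hdelta : 0 < delta) by (apply Rmin_glb_lt; [lra | apply Rpower_pos]).
  exists delta. split; [exact Hdelta|]. intros y [_ Hy]. simpl in *.
  unfold Rdist in *. rewrite (Hzero 1) by lra. rewrite Rminus_0_r.
  destruct (Rlt_le_dec y 1) as [Hy1|Hy1]; [|rewrite Hzero, Rabs_R0 by lra; exact Heps].
  rewrite Rabs_left in Hy by lra.
  assert (Hd1 : delta <= 1) by apply Rmin_l.
  assert (Hd2 : delta <= Rpower (eps / K) (/ gam)) by apply Rmin_r.
  assert (Hsmall : Rpower (1 - y) gam < eps / K).
  { replace (eps / K) with (Rpower (Rpower (eps / K) (/ gam)) gam)
      by (rewrite Rpower_mult, Rinv_l, Rpower_1;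
          [reflexivity | apply Rdiv_lt_0_compat | ]; lra).
    apply Rlt_Rpower_l; lra. }
  eapply Rle_lt_trans; [apply Hdecay; lra|].
  apply Rmult_lt_compat_l with (r := K) in Hsmall; [|exact HK].
  replace (K * (eps / K)) with eps in Hsmall by (field; lra). exact Hsmall.
Qed.

Lemma F_ext_derive (beta : R) (G : R -> R) x :
  (forall y, 0 < y -> ex_derive G y) -> x < 1 ->
  is_derive (F_ext beta G) x (dF_of beta G x).
Proof.
  intros HG Hx. apply is_derive_ext_loc with (F_of beta G); [|apply F_of_derive; auto].
  eapply filter_imp; [|apply (open_lt 1 x Hx)].
  intros u Hu. symmetry. apply F_ext_eq, Hu.
Qed.

(* F_ext is continuous everywhere: differentiable below 1, locally zero above
   1, and continuous at 1 by the decay of F. *)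
Lemma F_ext_continuous (beta : R) (G : R -> R) K gam x :
  (forall y, 0 < y -> ex_derive G y) -> 0 < gam -> 0 < K ->
  (forall x, 0 <= x < 1 -> Rabs (F_ext beta G x) <= K * Rpower (1 - x) gam) ->
  continuous (F_ext beta G) x.
Proof.
  intros HG Hgam HK Hdecay.
  destruct (Rtotal_order x 1) as [Hx|[Hx|Hx]].
  - apply (@ex_derive_continuous R_AbsRing R_NormedModule).
    eexists. apply F_ext_derive; auto.
  - subst x. apply continuous_at_1_of_decay with K gam; auto.
    intros y Hy. unfold F_ext. destruct (Rlt_dec y 1); [lra | reflexivity].
  - apply continuous_ext_loc with (fun _ => 0); [|apply continuous_const].
    eapply filter_imp; [|apply (open_gt 1 x Hx)].
    intros u Hu. unfold F_ext. destruct (Rlt_dec u 1); [simpl in Hu; lra | reflexivity].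
Qed.

(* Choosing γ = min(β/2, 1/4) and e = β - γ, the extension of F meets the
   hypotheses of [power_decay_limit]. *)
Lemma F_ext_power_decay (beta : R) (G : R -> R) :
  0 < beta -> in_calG G ->
  exists K gam, 0 < K /\ 0 < gam < 1/2 /\
    forall x, 0 <= x < 1 ->
      Rabs (F_ext beta G x) <= K * Rpower (1 - x) gam /\
      Rabs (dF_of beta G x) <= K * Rpower (1 - x) (gam - 1).
Proof.
  intros Hb HG.
  set (gam := Rmin (beta / 2) (1 / 4)).
  assert (Hgam : 0 < gam < 1/2 /\ gam <= beta / 2).
  { assert (gam <= 1 / 4) by apply Rmin_r. assert (gam <= beta / 2) by apply Rmin_l.
    assert (0 < gam) by (apply Rmin_glb_lt; lra). lra. }
  destruct (calG_power_bound G (beta - gam) HG) as [C [HC HB]]; [lra|].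
  exists ((1 + beta) * C), gam. split; [nra|]. split; [lra|].
  intros x Hx. rewrite F_ext_eq by lra.
  destruct (F_of_decay beta G C (beta - gam) x ltac:(lra) Hx HB) as [HF HdF].
  replace (beta - (beta - gam)) with gam in HF by ring.
  replace (beta - (beta - gam) - 1) with (gam - 1) in HdF by ring.
  assert (0 <= beta * C * Rpower (1 - x) gam)
    by (pose proof (Rpower_pos (1 - x) gam); repeat apply Rmult_le_pos; lra).
  split; lra.
Qed.

Theorem mainTheorem14 (beta : R) (G : R -> R) :
  0 < beta -> in_calG G ->
  is_lim
    (fun t => t * RInt (fun s => F_of beta G s *
                          (F_of beta G s - F_of beta G ((1 - 1 / t) * s))) 0 1)
    p_infty
    (- (1 / 2) * RInt (fun s => (F_of beta G s) ^ 2) 0 1).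
Proof.
  intros Hb HG.
  destruct (F_ext_power_decay beta G Hb HG) as [K [gam [HK [Hgam Hdecay]]]].
  destruct HG as [Hder _].
  assert (HM := power_decay_limit (F_ext beta G) (dF_of beta G) K gam
    (fun x => F_ext_continuous beta G K gam x Hder (proj1 Hgam) HK
                (fun x Hx => proj1 (Hdecay x Hx)))
    (fun x Hx => F_ext_derive beta G x Hder (proj2 Hx))
    (fun x Hx => proj1 (Hdecay x Hx)) (fun x Hx => proj2 (Hdecay x Hx)) Hgam HK).
  (* on [0,1] the extension coincides with F, so both sides agree for t >= 2 *)
  rewrite (RInt_ext (fun s => F_ext beta G s ^ 2) (fun s => F_of beta G s ^ 2)) in HM
    by (intros x Hx; rewrite Rmin_left, Rmax_right in Hx by lra; rewrite F_ext_eq by lra;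
        reflexivity).
  apply is_lim_ext_loc with (2 := HM). exists 2. intros t Ht. f_equal. apply RInt_ext.
  intros x Hx. rewrite Rmin_left, Rmax_right in Hx by lra.
  assert (0 < 1 / t) by (apply Rdiv_lt_0_compat; lra).
  rewrite !F_ext_eq by nra. reflexivity.
Qed.
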